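(* Consider the faulty-starter delivery problem described in the context, with finisher starting position $P=(x,y)$, $y\ge 0$. There exists an online algorithm with optimal (i.e. minimum possible) competitive ratio in which the finisher moves from its initial position $P$ along a straight line directly to some point $M=(m,0)$ of the segment $\overline{ST}$, and from then on it remains within the segment $\overline{ST}$.
   Context: Setting. In the plane let $S=(0,0)$ and $T=(1,0)$. A ''starter'' drone carrying a package starts at $S$ at time $0$ and moves at unit speed along the segment $\overline{ST}$ towards $T$. At an unknown time $t\in[0,1]$ it fails and stays forever at $(t,0)$ with the package (so at time $s$ the package is at $(\min\{s,t\},0)$). A ''finisher'' drone starts at time $0$ at $P=(x,y)$ with $y\ge 0$; it moves at speed (at most) $1$ and can start, stop and change direction instantaneously. The package can be handed over only when the two drones are co-located; the package is delivered at the first time the finisher, carrying the package, is at $T$. An online algorithm $\mathcal{A}$ specifies the finisher's trajectory using only $(x,y)$ (not $t$); $A(t)$ denotes its delivery time when the fail time is $t$. The optimal offline delivery time (fail time known in advance) is $\mathrm{Opt}(t)=\max\{1,\sqrt{(x-t)^2+y^2}+1-t\}$. The competitive ratio for fail time $t$ is $\mathrm{CR}_{\mathcal{A}}(t)=A(t)/\mathrm{Opt}(t)$, and the competitive ratio of $\mathcal{A}$ is $\mathrm{CR}_{\mathcal{A}}=\sup_{0\le t\le 1}\mathrm{CR}_{\mathcal{A}}(t)$. *)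

From Stdlib Require Import Reals Lra.
Open Scope R_scope.

Definition pt := (R * R)%type.

Definition dist (p q : pt) : R :=
  sqrt ((fst p - fst q) ^ 2 + (snd p - snd q) ^ 2).

Definition Tpt : pt := (1, 0).

(* Position of the package at time s when the starter fails at time t. *)
Definition pkg (t s : R) : pt := (Rmin s t, 0).

(* An online algorithm for start position P is the finisher's trajectory
   before it obtains the package: a map from time to the plane, starting at P,
   moving at speed at most 1.  It depends only on P (not on t).  Once the
   finisher first meets the package it takes it and moves straight to T
   (any other post-pickup behaviour only delays delivery). *)
Definition online_alg (P : pt) (g : R -> pt) : Prop :=
  g 0 = P /\
  forall s1 s2, 0 <= s1 -> 0 <= s2 -> dist (g s1) (g s2) <= Rabs (s1 - s2).

Definition first_meet (g : R -> pt) (t tau : R) : Prop :=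
  0 <= tau /\ g tau = pkg t tau /\
  forall s, 0 <= s < tau -> g s <> pkg t s.

(* Delivery time A(t) = d : pick up at the first meeting time, then go
   straight to T (distance 1 - min(tau,t)). *)
Definition delivery_time (g : R -> pt) (t d : R) : Prop :=
  exists tau, first_meet g t tau /\ d = tau + (1 - Rmin tau t).

Definition Opt (P : pt) (t : R) : R :=
  Rmax 1 (dist P (t, 0) + 1 - t).

Definition CR_le (P : pt) (g : R -> pt) (c : R) : Prop :=
  forall t, 0 <= t <= 1 ->
    exists d, delivery_time g t d /\ d <= c * Opt P t.

Definition straight_then_segment (P : pt) (g : R -> pt) : Prop :=
  exists m, 0 <= m <= 1 /\
    let M : pt := (m, 0) in
    let d := dist P M in
    (forall s, 0 <= s <= d ->
        g s = (fst P + (s / d) * (m - fst P), snd P + (s / d) * (0 - snd P))) /\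
    (forall s, d <= s -> 0 <= fst (g s) <= 1 /\ snd (g s) = 0).

(* Near-optimal algorithms are 1-Lipschitz paths starting at P.  Along an
   ultrafilter on nat refining the cofinite filter, the pointwise limit of a
   sequence of them with ratios tending to the infimum c* is again such a
   path; for every fail time it meets the package at the limit of the meeting
   times, so it attains c*.  Let M = (m, 0) be the first point of ST reached
   by this limit path, at time tau0 >= |PM|.  Walking straight from P to M,
   waiting there until tau0 and then following the projection of the limit
   path onto ST gives a 1-Lipschitz path which coincides with the limit path
   at every meeting, since all meetings take place on ST after tau0; hence
   it is optimal as well. *)
From Stdlib Require Import Reals Lra Lia Rgeom Classical ClassicalEpsilon.
From mathcomp Require ssrbool ssrnat filter.
Open Scope R_scope.

Lemma sup_approx (E : R -> Prop) (b : R) :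
  (forall r, E r -> r <= b) -> (exists r, E r) ->
  exists L, L <= b /\ (forall r, E r -> r <= L) /\
    forall e, 0 < e -> exists r, E r /\ L - e < r.
Proof.
  intros Hb Hne.
  destruct (completeness E (ex_intro _ b Hb) Hne) as [L [Hub Hlub]].
  exists L. split; [exact (Hlub b Hb)|]. split; [exact Hub|].
  intros e He.
  destruct (classic (exists r, E r /\ L - e < r)) as [Hex|Hno]; [exact Hex|].
  assert (L <= L - e); [|lra].
  apply Hlub. intros r Er. apply Rnot_lt_le. intros Hr. apply Hno. eauto.
Qed.

Lemma inf_approx (E : R -> Prop) (b : R) :
  (forall r, E r -> b <= r) -> (exists r, E r) ->
  exists L, b <= L /\ (forall r, E r -> L <= r) /\
    forall e, 0 < e -> exists r, E r /\ r < L + e.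
Proof.
  intros Hb [r0 Er0].
  destruct (sup_approx (fun r => E (- r)) (- b)) as [L [HLb [Hub Happ]]].
  - intros r Er. specialize (Hb _ Er). lra.
  - exists (- r0). rewrite Ropp_involutive. exact Er0.
  - exists (- L). split; [lra|split].
    + intros r Er. assert (- r <= L) by (apply Hub; rewrite Ropp_involutive; exact Er). lra.
    + intros e He. destruct (Happ e He) as [r [Er Hr]]. exists (- r). split; [exact Er|lra].
Qed.

Lemma Rinv_INR_S_bounds n : 0 < / INR (S n) <= 1.
Proof.
  pose proof (pos_INR n). rewrite S_INR. split.
  - apply Rinv_0_lt_compat. lra.
  - rewrite <- Rinv_1. apply Rinv_le_contravar; lra.
Qed.

Lemma Rmin_lip a b t : Rabs (Rmin a t - Rmin b t) <= Rabs (a - b).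
Proof. unfold Rmin. repeat destruct Rle_dec; unfold Rabs; repeat destruct Rcase_abs; lra. Qed.

Lemma Rmax_lip a b t : Rabs (Rmax a t - Rmax b t) <= Rabs (a - b).
Proof. unfold Rmax. repeat destruct Rle_dec; unfold Rabs; repeat destruct Rcase_abs; lra. Qed.

Lemma dist_euc_dist p q : dist p q = dist_euc (fst p) (snd p) (fst q) (snd q).
Proof. unfold dist, dist_euc, Rsqr. f_equal. ring. Qed.

Lemma dist_refl p : dist p p = 0.
Proof. rewrite dist_euc_dist. apply distance_refl. Qed.

Lemma dist_sym p q : dist p q = dist q p.
Proof. rewrite !dist_euc_dist. apply distance_symm. Qed.

Lemma dist_triangle p q r : dist p r <= dist p q + dist q r.
Proof. rewrite !dist_euc_dist. apply triangle. Qed.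

Lemma Rabs_fst_le_dist p q : Rabs (fst p - fst q) <= dist p q.
Proof.
  unfold dist. rewrite <- sqrt_Rsqr_abs. apply sqrt_le_1_alt.
  unfold Rsqr. pose proof (pow2_ge_0 (snd p - snd q)). nra.
Qed.

Lemma Rabs_snd_le_dist p q : Rabs (snd p - snd q) <= dist p q.
Proof.
  unfold dist. rewrite <- sqrt_Rsqr_abs. apply sqrt_le_1_alt.
  unfold Rsqr. pose proof (pow2_ge_0 (fst p - fst q)). nra.
Qed.

Lemma dist_le_Rabs_sum p q : dist p q <= Rabs (fst p - fst q) + Rabs (snd p - snd q).
Proof.
  unfold dist. set (a := fst p - fst q). set (b := snd p - snd q).
  pose proof (Rabs_pos a). pose proof (Rabs_pos b).
  rewrite <- (sqrt_Rsqr (Rabs a + Rabs b)) by lra.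
  apply sqrt_le_1_alt. rewrite Rsqr_plus, <- !Rsqr_abs. unfold Rsqr. nra.
Qed.

Lemma dist_xaxis a b : dist (a, 0) (b, 0) = Rabs (a - b).
Proof. unfold dist. simpl. rewrite <- sqrt_Rsqr_abs. f_equal. unfold Rsqr. ring. Qed.

Lemma dist_eq_0 p q : dist p q = 0 -> p = q.
Proof.
  intros H0. pose proof (Rabs_fst_le_dist p q) as Hfst. pose proof (Rabs_snd_le_dist p q) as Hsnd.
  destruct p as [a b], q as [c d]. simpl in *. rewrite H0 in *.
  f_equal; revert Hfst Hsnd; unfold Rabs; repeat destruct Rcase_abs; lra.
Qed.

Lemma dist_eq_of_small p q : (forall e, 0 < e -> dist p q < e) -> p = q.
Proof.
  intros Hsmall. apply dist_eq_0. apply Rle_antisym; [|apply sqrt_pos].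
  apply Rle_plus_epsilon. intros e He. specialize (Hsmall e He). lra.
Qed.

Definition lip_from (G : R -> pt) (a : R) : Prop :=
  forall s1 s2, a <= s1 -> a <= s2 -> dist (G s1) (G s2) <= Rabs (s1 - s2).

Lemma online_alg_dist_start P g s : online_alg P g -> 0 <= s -> dist (g s) P <= s.
Proof.
  intros [Hg0 Hlip] Hs. rewrite <- Hg0.
  pose proof (Hlip s 0 Hs (Rle_refl 0)) as Hs0. rewrite Rminus_0_r, Rabs_right in Hs0 by lra.
  exact Hs0.
Qed.

Lemma dist_pkg t a b : dist (pkg t a) (pkg t b) <= Rabs (a - b).
Proof. unfold pkg. rewrite dist_xaxis. apply Rmin_lip. Qed.

Lemma exists_first_meet (G F : R -> pt) (s0 : R) :
  lip_from G 0 -> lip_from F 0 -> 0 <= s0 -> G s0 = F s0 ->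
  exists tau, 0 <= tau <= s0 /\ G tau = F tau /\ forall s, 0 <= s < tau -> G s <> F s.
Proof.
  intros HG HF Hs0 Hmeet.
  destruct (inf_approx (fun s => 0 <= s /\ G s = F s) 0) as [tau [Htau [Hlow Happ]]].
  - intros s [Hs _]. exact Hs.
  - exists s0. auto.
  - exists tau. split; [split; [exact Htau|apply Hlow; auto]|split].
    + apply dist_eq_of_small. intros e He.
      destruct (Happ (e / 2)) as [s [[Hs HGF] Hlt]]; [lra|].
      assert (tau <= s) by (apply Hlow; auto).
      assert (HGs : dist (G tau) (G s) <= s - tau).
      { rewrite <- (Rabs_right (s - tau)), Rabs_minus_sym by lra. apply HG; assumption. }
      assert (HFs : dist (F s) (F tau) <= s - tau).
      { rewrite <- (Rabs_right (s - tau)) by lra. apply HF; assumption. }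
      pose proof (dist_triangle (G tau) (G s) (F tau)). rewrite HGF in *. lra.
    + intros s [Hs Hst] HGF. pose proof (Hlow s (conj Hs HGF)). lra.
Qed.

Definition deliver (tau t : R) : R := tau + (1 - Rmin tau t).

Lemma deliver_mono a b t : a <= b -> deliver a t <= deliver b t.
Proof. intros. unfold deliver, Rmin. repeat destruct Rle_dec; lra. Qed.

Lemma deliver_lip a b t : Rabs (deliver a t - deliver b t) <= 2 * Rabs (a - b).
Proof.
  pose proof (Rmin_lip a b t) as Hmin. unfold deliver.
  revert Hmin. unfold Rabs. repeat destruct Rcase_abs; lra.
Qed.

Lemma Opt_ge1 P t : 1 <= Opt P t.
Proof. apply Rmax_l. Qed.

(* [CR_le] with an arbitrary meeting time in place of the first one. *)
Definition meets_within (P : pt) (G : R -> pt) (c : R) : Prop :=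
  forall t, 0 <= t <= 1 ->
    exists s, 0 <= s /\ G s = pkg t s /\ deliver s t <= c * Opt P t.

Lemma meets_within_of_CR_le P G c : CR_le P G c -> meets_within P G c.
Proof.
  intros HCR t Ht. destruct (HCR t Ht) as [d [[tau [[Htau [Hmeet _]] ->]] Hle]].
  exists tau. auto.
Qed.

Lemma CR_le_of_meets_within P G c : lip_from G 0 -> meets_within P G c -> CR_le P G c.
Proof.
  intros HG Hm t Ht. destruct (Hm t Ht) as [s [Hs [Hmeet Hle]]].
  destruct (exists_first_meet G (pkg t) s HG (fun a b _ _ => dist_pkg t a b) Hs Hmeet)
    as [tau [[Htau Hts] [Hmt Hfirst]]].
  exists (deliver tau t). split.
  - exists tau. repeat split; auto.
  - eapply Rle_trans; [apply deliver_mono, Hts|exact Hle].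
Qed.

Lemma meets_within_mono P G c c' : c <= c' -> meets_within P G c -> meets_within P G c'.
Proof.
  intros Hc Hm t Ht. destruct (Hm t Ht) as [s [Hs [Hmeet Hle]]].
  exists s. repeat split; auto. pose proof (Opt_ge1 P t).
  eapply Rle_trans; [exact Hle|]. apply Rmult_le_compat_r; lra.
Qed.

Lemma meets_within_nonneg P G c : meets_within P G c -> 0 <= c.
Proof.
  intros Hm. destruct (Hm 0) as [s [Hs [_ Hle]]]; [lra|].
  pose proof (Opt_ge1 P 0).
  assert (Rmin s 0 = 0) by (unfold Rmin; destruct Rle_dec; lra).
  unfold deliver in Hle. nra.
Qed.

Definition walk (P Q : pt) (s : R) : pt :=
  (fst P + s / dist P Q * (fst Q - fst P), snd P + s / dist P Q * (snd Q - snd P)).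

Lemma walk_0 P Q : walk P Q 0 = P.
Proof. destruct P. unfold walk. simpl. f_equal; unfold Rdiv; ring. Qed.

Lemma walk_end P Q : walk P Q (dist P Q) = Q.
Proof.
  destruct (Req_dec (dist P Q) 0) as [H0|H0].
  - rewrite H0. apply dist_eq_0 in H0. subst Q. apply walk_0.
  - destruct P, Q. unfold walk. simpl. f_equal; field; exact H0.
Qed.

Lemma walk_lip P Q s1 s2 : dist (walk P Q s1) (walk P Q s2) <= Rabs (s1 - s2).
Proof.
  destruct (Req_dec (dist P Q) 0) as [H0|H0].
  - apply dist_eq_0 in H0. subst Q.
    replace (walk P P s1) with P by (destruct P; unfold walk; simpl; f_equal; ring).
    replace (walk P P s2) with P by (destruct P; unfold walk; simpl; f_equal; ring).
    rewrite dist_refl. apply Rabs_pos.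
  - right. set (d := dist P Q) in *.
    assert (Hd2 : d * d = (fst Q - fst P) ^ 2 + (snd Q - snd P) ^ 2).
    { unfold d, dist. rewrite sqrt_sqrt; [ring|].
      pose proof (pow2_ge_0 (fst P - fst Q)). pose proof (pow2_ge_0 (snd P - snd Q)). lra. }
    unfold walk. fold d. unfold dist. simpl. rewrite <- sqrt_Rsqr_abs. f_equal.
    transitivity (((s1 - s2) / d) ^ 2 * (d * d)).
    + rewrite Hd2. field. exact H0.
    + unfold Rsqr. field. exact H0.
Qed.

Definition onseg (p : pt) : Prop := 0 <= fst p <= 1 /\ snd p = 0.

Definition clamp (p : pt) : pt := (Rmax 0 (Rmin (fst p) 1), 0).

Lemma clamp_lip p q : dist (clamp p) (clamp q) <= dist p q.
Proof.
  unfold clamp. rewrite dist_xaxis. eapply Rle_trans; [|apply Rabs_fst_le_dist].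
  unfold Rmax, Rmin. repeat destruct Rle_dec; unfold Rabs; repeat destruct Rcase_abs; lra.
Qed.

Lemma onseg_clamp p : onseg (clamp p).
Proof. unfold onseg, clamp, Rmax, Rmin. simpl. repeat destruct Rle_dec; lra. Qed.

Lemma clamp_id p : onseg p -> clamp p = p.
Proof.
  destruct p as [a b]. unfold onseg, clamp. simpl. intros [Ha ->].
  f_equal. unfold Rmax, Rmin. repeat destruct Rle_dec; lra.
Qed.

Lemma onseg_pkg t s : 0 <= t <= 1 -> 0 <= s -> onseg (pkg t s).
Proof. unfold onseg, pkg, Rmin. simpl. destruct Rle_dec; lra. Qed.

Section Detour.

Variables (P : pt) (m tau0 : R) (H : R -> pt).
Hypotheses (Hm : 0 <= m <= 1) (Htau0 : dist P (m, 0) <= tau0)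
  (HH : H tau0 = (m, 0)) (Hlip : lip_from H tau0).

Definition detour (s : R) : pt :=
  if Rle_dec s (dist P (m, 0)) then walk P (m, 0) s else clamp (H (Rmax s tau0)).

Lemma detour_tail_lip s1 s2 :
  dist (clamp (H (Rmax s1 tau0))) (clamp (H (Rmax s2 tau0))) <= Rabs (s1 - s2).
Proof.
  eapply Rle_trans; [apply clamp_lip|]. eapply Rle_trans; [apply Hlip; apply Rmax_r|].
  apply Rmax_lip.
Qed.

Lemma detour_lip s1 s2 : dist (detour s1) (detour s2) <= Rabs (s1 - s2).
Proof.
  set (d := dist P (m, 0)).
  assert (Hmix : forall a b, a <= d -> ~ b <= d ->
            dist (walk P (m, 0) a) (clamp (H (Rmax b tau0))) <= Rabs (a - b)).
  { intros a b Ha Hb.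
    assert (HM : clamp (H (Rmax d tau0)) = (m, 0)).
    { rewrite Rmax_right, HH by exact Htau0. apply clamp_id. split; simpl; lra. }
    pose proof (walk_lip P (m, 0) a d) as L1. rewrite walk_end in L1.
    pose proof (detour_tail_lip d b) as L2. rewrite HM in L2.
    pose proof (dist_triangle (walk P (m, 0) a) (m, 0) (clamp (H (Rmax b tau0)))).
    revert L1 L2. unfold Rabs. repeat destruct Rcase_abs; lra. }
  unfold detour. fold d. destruct (Rle_dec s1 d), (Rle_dec s2 d).
  - apply walk_lip.
  - apply Hmix; assumption.
  - rewrite dist_sym, Rabs_minus_sym. apply Hmix; assumption.
  - apply detour_tail_lip.
Qed.

Lemma detour_online : online_alg P detour.
Proof.
  split.
  - unfold detour. destruct Rle_dec as [_|Hn]; [apply walk_0|].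
    exfalso. apply Hn. apply sqrt_pos.
  - intros s1 s2 _ _. apply detour_lip.
Qed.

Lemma detour_straight_then_segment : straight_then_segment P detour.
Proof.
  exists m. split; [exact Hm|]. split.
  - intros s [_ Hs]. unfold detour. destruct Rle_dec; [reflexivity|contradiction].
  - intros s Hs. unfold detour. destruct Rle_dec.
    + replace s with (dist P (m, 0)) by lra. rewrite walk_end. simpl. lra.
    + apply onseg_clamp.
Qed.

Lemma detour_meets_within c :
  (forall t s, 0 <= t <= 1 -> 0 <= s -> H s = pkg t s -> tau0 <= s) ->
  meets_within P H c -> meets_within P detour c.
Proof.
  intros Hafter HmH t Ht. destruct (HmH t Ht) as [s [Hs [Hmeet Hle]]].
  exists s. repeat split; auto.
  pose proof (Hafter t s Ht Hs Hmeet). unfold detour. destruct Rle_dec.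
  - transitivity (m, 0).
    + replace s with (dist P (m, 0)) by lra. apply walk_end.
    + rewrite <- HH. replace tau0 with s by lra. exact Hmeet.
  - rewrite Rmax_left, Hmeet by lra. apply clamp_id, onseg_pkg; assumption.
Qed.

End Detour.

Record ultrafilter_nat (U : (nat -> Prop) -> Prop) : Prop := {
  U_and : forall A B, U A -> U B -> U (fun n => A n /\ B n);
  U_mono : forall A B : nat -> Prop, U A -> (forall n, A n -> B n) -> U B;
  U_proper : ~ U (fun _ => False);
  U_ultra : forall A, U A \/ U (fun n => ~ A n);
  U_cofinite : forall N, U (fun n => (N <= n)%nat) }.

Lemma ultrafilter_nat_exists : exists U, ultrafilter_nat U.
Proof.
  destruct (@filter.ultraFilterLemma nat _ filter.eventually_filter) as [U [HU Hfin]].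
  pose proof (@filter.ultra_proper _ _ HU) as Hproper.
  exists U. split.
  - intros A B HA HB. exact (filter.filterI HA HB).
  - intros A B HA HAB. exact (filter.filterS HAB HA).
  - intros HF. destruct (filter.filter_ex HF) as [n []].
  - intros A. exact (filter.in_ultra_setVsetC A HU).
  - intros N. apply Hfin. exists N; [exact I|].
    intros n Hn. exact (ssrbool.elimT ssrnat.leP Hn).
Qed.

Section Ultralimit.

Variable U : (nat -> Prop) -> Prop.
Hypothesis HU : ultrafilter_nat U.

Definition ulim (a : nat -> R) (L : R) : Prop :=
  forall e, 0 < e -> U (fun n => Rabs (a n - L) < e).

Lemma U_exists A : U A -> exists n, A n.
Proof.
  intros HA. apply NNPP. intros Hno. apply (U_proper _ HU).
  apply (U_mono _ HU A _ HA). intros n An. apply Hno. eauto.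
Qed.

Lemma U_forall (A : nat -> Prop) : (forall n, A n) -> U A.
Proof. intros HA. apply (U_mono _ HU _ _ (U_cofinite _ HU 0) (fun n _ => HA n)). Qed.

Lemma U_inv_lt e : 0 < e -> U (fun n => / INR (S n) < e).
Proof.
  intros He. destruct (archimed_cor1 e He) as [N [HN HN0]].
  apply (U_mono _ HU _ _ (U_cofinite _ HU N)).
  intros n Hn. eapply Rle_lt_trans; [|exact HN].
  apply Rinv_le_contravar; [apply lt_0_INR; exact HN0|apply le_INR; lia].
Qed.

Lemma ulim_exists a B : (forall n, Rabs (a n) <= B) -> exists L, ulim a L.
Proof.
  intros Hb.
  assert (Hbetween : forall n, - B <= a n <= B).
  { intros n. specialize (Hb n). revert Hb. unfold Rabs. destruct Rcase_abs; lra. }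
  destruct (sup_approx (fun r => U (fun n => r <= a n)) B) as [L [_ [Hub Happ]]].
  - intros r Hr. destruct (U_exists _ Hr) as [n Hn]. specialize (Hbetween n). lra.
  - exists (- B). apply U_forall. intros n. apply Hbetween.
  - exists L. intros e He.
    assert (Hlo : U (fun n => L - e < a n)).
    { destruct (Happ e He) as [r [Hr HLr]].
      apply (U_mono _ HU _ _ Hr). intros n Hn. lra. }
    assert (Hhi : U (fun n => a n < L + e)).
    { destruct (U_ultra _ HU (fun n => L + e / 2 <= a n)) as [Hc|Hc].
      - specialize (Hub _ Hc). lra.
      - apply (U_mono _ HU _ _ Hc). intros n Hn. apply Rnot_le_lt in Hn. lra. }
    apply (U_mono _ HU _ _ (U_and _ HU _ _ Hlo Hhi)).
    intros n [Hn1 Hn2]. unfold Rabs. destruct Rcase_abs; lra.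
Qed.

Definition ulimit (a : nat -> R) : R := epsilon (inhabits 0) (ulim a).

Lemma ulimit_spec a B : (forall n, Rabs (a n) <= B) -> ulim a (ulimit a).
Proof. intros Hb. unfold ulimit. apply epsilon_spec. exact (ulim_exists a B Hb). Qed.

Lemma ulim_const a c L : (forall n, a n = c) -> ulim a L -> L = c.
Proof.
  intros Ha HL. apply cond_eq. intros e He. destruct (U_exists _ (HL e He)) as [n Hn].
  rewrite Ha, Rabs_minus_sym in Hn. exact Hn.
Qed.

Lemma ulim_ge a b L : (forall n, b <= a n) -> ulim a L -> b <= L.
Proof.
  intros Hb HL. apply Rle_plus_epsilon. intros e He.
  destruct (U_exists _ (HL e He)) as [n Hn]. specialize (Hb n).
  revert Hn. unfold Rabs. destruct Rcase_abs; lra.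
Qed.

Lemma ulim_le a b L : (forall e, 0 < e -> U (fun n => a n <= b + e)) -> ulim a L -> L <= b.
Proof.
  intros Hb HL. apply Rle_plus_epsilon. intros e He.
  destruct (U_exists _ (U_and _ HU _ _ (HL (e / 2) ltac:(lra)) (Hb (e / 2) ltac:(lra))))
    as [n [Hn Hbn]].
  revert Hn. unfold Rabs. destruct Rcase_abs; lra.
Qed.

Lemma ulim_lip_comp (f : R -> R) K a L : 0 < K ->
  (forall u v, Rabs (f u - f v) <= K * Rabs (u - v)) ->
  ulim a L -> ulim (fun n => f (a n)) (f L).
Proof.
  intros HK Hf HL e He.
  apply (U_mono _ HU _ _ (HL (e / K) ltac:(apply Rdiv_lt_0_compat; lra))).
  intros n Hn. eapply Rle_lt_trans; [apply Hf|].
  apply (Rmult_lt_compat_l K) in Hn; [|exact HK].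
  replace (K * (e / K)) with e in Hn by (field; lra). exact Hn.
Qed.

Variables (P : pt) (h : nat -> R -> pt).
Hypothesis Hh : forall n, online_alg P (h n).

Definition ulimit_path (s : R) : pt :=
  (ulimit (fun n => fst (h n s)), ulimit (fun n => snd (h n s))).

Lemma ulimit_path_approx s e :
  0 <= s -> 0 < e -> U (fun n => dist (ulimit_path s) (h n s) < e).
Proof.
  intros Hs He.
  assert (Hfst : ulim (fun n => fst (h n s)) (fst (ulimit_path s))).
  { apply (ulimit_spec _ (Rabs (fst P) + s)). intros n.
    pose proof (Rabs_fst_le_dist (h n s) P). pose proof (online_alg_dist_start P _ s (Hh n) Hs).
    pose proof (Rabs_triang_inv (fst (h n s)) (fst P)). lra. }
  assert (Hsnd : ulim (fun n => snd (h n s)) (snd (ulimit_path s))).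
  { apply (ulimit_spec _ (Rabs (snd P) + s)). intros n.
    pose proof (Rabs_snd_le_dist (h n s) P). pose proof (online_alg_dist_start P _ s (Hh n) Hs).
    pose proof (Rabs_triang_inv (snd (h n s)) (snd P)). lra. }
  apply (U_mono _ HU _ _ (U_and _ HU _ _ (Hfst (e / 2) ltac:(lra)) (Hsnd (e / 2) ltac:(lra)))).
  intros n [H1 H2]. eapply Rle_lt_trans; [apply dist_le_Rabs_sum|].
  rewrite Rabs_minus_sym in H1, H2. lra.
Qed.

Lemma ulimit_path_start : ulimit_path 0 = P.
Proof.
  assert (Hstart : forall n, h n 0 = P) by (intros n; apply (Hh n)).
  assert (Hb : forall n, Rabs (fst (h n 0)) <= Rabs (fst P) /\ Rabs (snd (h n 0)) <= Rabs (snd P)).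
  { intros n. rewrite Hstart. split; apply Rle_refl. }
  destruct P as [px py]. unfold ulimit_path. f_equal.
  - apply (ulim_const (fun n => fst (h n 0))); [intros n; rewrite Hstart; reflexivity|].
    apply (ulimit_spec _ _ (fun n => proj1 (Hb n))).
  - apply (ulim_const (fun n => snd (h n 0))); [intros n; rewrite Hstart; reflexivity|].
    apply (ulimit_spec _ _ (fun n => proj2 (Hb n))).
Qed.

Lemma ulimit_path_lip : lip_from ulimit_path 0.
Proof.
  intros s1 s2 Hs1 Hs2. apply Rle_plus_epsilon. intros e He.
  destruct (U_exists _ (U_and _ HU _ _ (ulimit_path_approx s1 (e / 2) Hs1 ltac:(lra))
                                        (ulimit_path_approx s2 (e / 2) Hs2 ltac:(lra))))
    as [n [H1 H2]].
  pose proof (proj2 (Hh n) s1 s2 Hs1 Hs2).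
  pose proof (dist_triangle (ulimit_path s1) (h n s1) (ulimit_path s2)).
  pose proof (dist_triangle (h n s1) (h n s2) (ulimit_path s2)).
  rewrite (dist_sym (h n s2)) in *. lra.
Qed.

Lemma ulimit_path_meets t tau sg :
  (forall n, 0 <= tau n) -> (forall n, h n (tau n) = pkg t (tau n)) ->
  ulim tau sg -> ulimit_path sg = pkg t sg.
Proof.
  intros Htau Hmeet Hsg.
  assert (Hsg0 : 0 <= sg) by exact (ulim_ge tau 0 sg Htau Hsg).
  apply dist_eq_of_small. intros e He.
  destruct (U_exists _ (U_and _ HU _ _ (ulimit_path_approx sg (e / 3) Hsg0 ltac:(lra))
                                        (Hsg (e / 3) ltac:(lra))))
    as [n [H1 H2]].
  pose proof (proj2 (Hh n) sg (tau n) Hsg0 (Htau n)) as Hhn.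
  rewrite Hmeet, Rabs_minus_sym in Hhn.
  pose proof (dist_pkg t (tau n) sg).
  pose proof (dist_triangle (ulimit_path sg) (h n sg) (pkg t sg)).
  pose proof (dist_triangle (h n sg) (pkg t (tau n)) (pkg t sg)).
  lra.
Qed.

Lemma ulimit_path_meets_within cs :
  (forall n, meets_within P (h n) (cs + / INR (S n))) -> meets_within P ulimit_path cs.
Proof.
  intros Hcs t Ht. set (O := Opt P t). pose proof (Opt_ge1 P t) as HO. fold O in HO.
  destruct (choice (fun n s => 0 <= s /\ h n s = pkg t s /\ deliver s t <= (cs + / INR (S n)) * O))
    as [tau Htau]; [intros n; exact (Hcs n t Ht)|].
  assert (Hbound : forall n, Rabs (tau n) <= (Rabs cs + 1) * O).
  { intros n. destruct (Htau n) as [Hpos [_ Hle]]. pose proof (Rinv_INR_S_bounds n).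
    pose proof (Rle_abs cs). pose proof (Rmin_r (tau n) t). unfold deliver in Hle.
    assert ((cs + / INR (S n)) * O <= (Rabs cs + 1) * O) by (apply Rmult_le_compat_r; lra).
    rewrite (Rabs_right (tau n)) by lra. lra. }
  pose proof (ulimit_spec tau _ Hbound) as Hsg. set (sg := ulimit tau) in *.
  assert (Hpos : forall n, 0 <= tau n) by (intros n; apply Htau).
  assert (Hmeet : forall n, h n (tau n) = pkg t (tau n)) by (intros n; apply Htau).
  exists sg. split; [|split].
  - exact (ulim_ge tau 0 sg Hpos Hsg).
  - exact (ulimit_path_meets t tau sg Hpos Hmeet Hsg).
  - apply (ulim_le (fun n => deliver (tau n) t)).
    + intros e He.
      apply (U_mono _ HU _ _ (U_inv_lt (e / O) ltac:(apply Rdiv_lt_0_compat; lra))).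
      intros n Hn. destruct (Htau n) as [_ [_ Hle]].
      apply (Rmult_lt_compat_r O) in Hn; [|lra].
      replace (e / O * O) with e in Hn by (field; lra). nra.
    + apply (ulim_lip_comp (fun s => deliver s t) 2); [lra| |exact Hsg].
      intros u v. apply deliver_lip.
Qed.

End Ultralimit.

Lemma exists_optimal_path P :
  (exists h c, online_alg P h /\ CR_le P h c) ->
  exists H cs, H 0 = P /\ lip_from H 0 /\ meets_within P H cs /\
    forall h c, online_alg P h -> CR_le P h c -> cs <= c.
Proof.
  intros [h0 [c0 Hc0]].
  destruct (inf_approx (fun c => exists h, online_alg P h /\ CR_le P h c) 0)
    as [cs [_ [Hlow Happ]]].
  - intros c [h [_ Hc]]. exact (meets_within_nonneg _ _ _ (meets_within_of_CR_le _ _ _ Hc)).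
  - exists c0, h0. exact Hc0.
  - destruct (choice (fun n h => online_alg P h /\ meets_within P h (cs + / INR (S n))))
      as [hs Hhs].
    { intros n. destruct (Happ (/ INR (S n)) (proj1 (Rinv_INR_S_bounds n)))
        as [c [[h [Hh Hc]] Hlt]].
      exists h. split; [exact Hh|].
      apply (meets_within_mono _ _ c); [lra|exact (meets_within_of_CR_le _ _ _ Hc)]. }
    destruct ultrafilter_nat_exists as [U HU].
    pose proof (fun n => proj1 (Hhs n)) as Hon.
    exists (ulimit_path U hs), cs. split; [|split; [|split]].
    + exact (ulimit_path_start U HU P hs Hon).
    + exact (ulimit_path_lip U HU P hs Hon).
    + exact (ulimit_path_meets_within U HU P hs Hon cs (fun n => proj2 (Hhs n))).
    + intros h c Hh Hc. apply Hlow. eauto.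
Qed.

Lemma exists_straight_then_segment P :
  exists g, online_alg P g /\ straight_then_segment P g.
Proof.
  assert (Hconst : lip_from (fun _ => (0, 0)) (dist P (0, 0))).
  { intros s1 s2 _ _. rewrite dist_refl. apply Rabs_pos. }
  exists (detour P 0 (dist P (0, 0)) (fun _ => (0, 0))). split.
  - apply detour_online; [lra|apply Rle_refl|reflexivity|exact Hconst].
  - apply detour_straight_then_segment. lra.
Qed.

Lemma straighten_path P H c :
  H 0 = P -> lip_from H 0 -> meets_within P H c ->
  exists g, online_alg P g /\ straight_then_segment P g /\ meets_within P g c.
Proof.
  intros HH0 Hlip Hmeet.
  destruct (Hmeet 0) as [s0 [Hs0 [Hms0 _]]]; [lra|].
  assert (Hclamp_lip : lip_from (fun s => clamp (H s)) 0).
  { intros s1 s2 Hs1 Hs2. eapply Rle_trans; [apply clamp_lip|apply Hlip; assumption]. }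
  destruct (exists_first_meet H (fun s => clamp (H s)) s0 Hlip Hclamp_lip Hs0)
    as [tau0 [[Htau0 _] [Hon Hfirst]]].
  { rewrite Hms0, clamp_id; [reflexivity|apply onseg_pkg; lra]. }
  destruct (onseg_clamp (H tau0)) as [Hm HHm]. rewrite <- Hon in Hm, HHm.
  set (m := fst (H tau0)) in Hm.
  assert (HM : H tau0 = (m, 0)) by (destruct (H tau0); simpl in *; subst; reflexivity).
  assert (Hafter : forall t s, 0 <= t <= 1 -> 0 <= s -> H s = pkg t s -> tau0 <= s).
  { intros t s Ht Hs Hst. apply Rnot_lt_le. intros Hlt. apply (Hfirst s); [lra|].
    rewrite Hst, clamp_id; [reflexivity|apply onseg_pkg; assumption]. }
  assert (Hd : dist P (m, 0) <= tau0).
  { rewrite <- HH0, <- HM. pose proof (Hlip 0 tau0 (Rle_refl 0) Htau0) as Hstart.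
    rewrite Rminus_0_l, Rabs_Ropp, Rabs_right in Hstart by lra. exact Hstart. }
  assert (Hlip0 : lip_from H tau0) by (intros s1 s2 ? ?; apply Hlip; lra).
  exists (detour P m tau0 H). split; [|split].
  - apply detour_online; assumption.
  - apply detour_straight_then_segment. exact Hm.
  - apply detour_meets_within; assumption.
Qed.

Theorem lemma1 (x y : R) (hy : 0 <= y) :
  exists g : R -> pt,
    online_alg (x, y) g /\ straight_then_segment (x, y) g /\
    forall (h : R -> pt) (c : R),
      online_alg (x, y) h -> CR_le (x, y) h c -> CR_le (x, y) g c.
Proof.
  destruct (classic (exists h c, online_alg (x, y) h /\ CR_le (x, y) h c)) as [Hex|Hnone].
  - destruct (exists_optimal_path (x, y) Hex) as [H [cs [HH0 [Hlip [Hmeet Hinf]]]]].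
    destruct (straighten_path (x, y) H cs HH0 Hlip Hmeet) as [g [Hg [Hsts Hgmeet]]].
    exists g. split; [exact Hg|split; [exact Hsts|]].
    intros h c Hh Hc. apply CR_le_of_meets_within; [exact (proj2 Hg)|].
    apply (meets_within_mono _ _ cs); [exact (Hinf h c Hh Hc)|exact Hgmeet].
  - destruct (exists_straight_then_segment (x, y)) as [g [Hg Hsts]].
    exists g. split; [exact Hg|split; [exact Hsts|]].
    intros h c Hh Hc. exfalso. eauto.
Qed.
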